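(* There is an absolute constant $C$ such that for all positive integers $n$, $\mathrm{sf}(\Lambda(R_0))\le 2^{0.36n^2+Cn}\,\mathrm{sf}(\Lambda(R\cup L))$.
   Context: $R_0=\{(x,y)\in[0,n]^2:0.7n\le x+y\le1.7n\}$, $R=\{(x,y)\in\mathbb{R}^2:0.7n\le x+y\le n,\ |x-y|\le0.8n\}$, $L=\{(x,y)\in\mathbb{R}^2:2\lceil0.7n\rceil\le x+y\le1.7n,\ |x-y|\le0.4n\}$. For $X\subseteq\mathbb{R}^2$, $\Lambda(X)=\mathbb{Z}^2\cap X$. $\mathrm{sf}(Y)$ is the number of sum-free subsets of a finite $Y\subset\mathbb{Z}^2$ (no $a,b,c$, not necessarily distinct, with $a+b=c$). *)

From HB Require Import structures.
From mathcomp Require Import all_boot all_order all_algebra finmap.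
From Stdlib Require Import Reals.
Set Implicit Arguments. Unset Strict Implicit. Unset Printing Implicit Defensive.
Import Order.TTheory GRing.Theory Num.Theory.
Local Open Scope fset_scope.
Local Open Scope ring_scope.

Definition pt := (int * int)%type.
Definition padd (p q : pt) : pt := (p.1 + q.1, p.2 + q.2).

Definition sum_free (A : {fset pt}) : bool :=
  all (fun a => all (fun b => padd a b \notin A) A) A.

Definition sf (Y : {fset pt}) : nat := #|` [fset A in fpowerset Y | sum_free A]|.

Definition ceil07 (n : nat) : int := Num.ceil ((7 * n)%:R / 10 : rat).

(* Regions, with all inequalities cleared of denominators (multiplied by 10) *)
Definition inR0 (n : nat) (p : pt) : bool :=
  [&& 0 <= p.1 <= n%:Z, 0 <= p.2 <= n%:Z,
      (7 * n)%:Z <= 10 * (p.1 + p.2) & 10 * (p.1 + p.2) <= (17 * n)%:Z].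

Definition inR (n : nat) (p : pt) : bool :=
  [&& (7 * n)%:Z <= 10 * (p.1 + p.2), p.1 + p.2 <= n%:Z
    & 10 * `|p.1 - p.2| <= (8 * n)%:Z].

Definition inL (n : nat) (p : pt) : bool :=
  [&& 2 * ceil07 n <= p.1 + p.2, 10 * (p.1 + p.2) <= (17 * n)%:Z
    & 10 * `|p.1 - p.2| <= (4 * n)%:Z].

(* A bounding box [-2n, 2n]^2 of integer points; every point of R_0, R and L
   lies in [-n, 2n]^2, so Lambda below is exactly Z^2 ∩ X. *)
Definition brange (n : nat) : seq int :=
  [seq i%:Z - (2 * n)%:Z | i <- iota 0 (4 * n).+1].
Definition box (n : nat) : seq pt :=
  [seq (x, y) | x <- brange n, y <- brange n].

Definition Lambda (n : nat) (X : pt -> bool) : {fset pt} :=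
  [fset p in box n | X p].

Definition inRuL (n : nat) (p : pt) : bool := inR n p || inL n p.

(* Splitting a sum-free A ⊆ Λ(R0) into A ∩ Λ(R∪L), which is again sum-free, and
   A \ Λ(R∪L), an arbitrary subset of D = Λ(R0) \ Λ(R∪L), gives
   sf(Λ(R0)) ≤ 2^|D| sf(Λ(R∪L)).  D is counted along the antidiagonals x + y = s:
   for s ≤ n its points have |x - y| > 0.8n, and for s > n they have |x - y| > 0.4n
   unless s < 2⌈0.7n⌉.  So each antidiagonal meets D in two arms and possibly a middle
   segment of length 0.4n, and summing over s gives |D| ≤ 0.36 n² + O(n). *)

From mathcomp Require Import all_boot all_order all_algebra finmap zify.
From Stdlib Require Import Reals Lra.
(* [Reals] rebinds [^] on [nat] to [Nat.pow]; restore [expn]. *)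
Import ssrnat.
Import Num.Theory.

Section Ceiling.
Local Open Scope ring_scope.

Definition c07 (n : nat) : nat := `|ceil07 n|%N.

Lemma ceil07_bounds n : (7 * n)%:Z <= 10 * ceil07 n < (7 * n)%:Z + 10.
Proof.
have /andP[c_below c_above] := ceil_itv ((7 * n)%:R / 10 : rat).
rewrite -/(ceil07 n) in c_below c_above.
rewrite ler_pdivrMr // in c_above; rewrite ltr_pdivlMr // in c_below.
have c_ge : (7 * n)%:Z <= ceil07 n * 10.
  by rewrite -(ler_int rat) intrM.
have c_lt : (ceil07 n - 1) * 10 < (7 * n)%:Z.
  by rewrite -(ltr_int rat) intrM.
lia.
Qed.

Lemma ceil07E n : ceil07 n = (c07 n)%:Z.
Proof. by rewrite /c07 gez0_abs //; have := ceil07_bounds n; lia. Qed.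

Lemma c07_bounds n : (7 * n <= 10 * c07 n < 7 * n + 10)%N.
Proof. by have := ceil07_bounds n; rewrite ceil07E; lia. Qed.

End Ceiling.

Section SumFree.
Local Open Scope fset_scope.

Lemma sum_free_fsubset (A B : {fset pt}) : B `<=` A -> sum_free A -> sum_free B.
Proof.
move=> /fsubsetP sBA /allP sfA; apply/allP => a aB; apply/allP => b bB.
by apply: contra (allP (sfA a (sBA a aB)) b (sBA b bB)); apply: sBA.
Qed.

Lemma sf_fsubset (P Q : {fset pt}) : P `<=` Q -> (sf P <= sf Q)%N.
Proof.
move=> sPQ; apply/fsubset_leq_card/fsubsetP => A.
rewrite !inE /= !fpowersetE => /andP[sAP ->]; rewrite andbT.
exact: fsubset_trans sPQ.
Qed.

Lemma sf_le_exp_card_fsetD (Y P : {fset pt}) :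
  (sf Y <= 2 ^ #|` Y `\` P| * sf P)%N.
Proof.
set S := [fset A in fpowerset Y | sum_free A].
set SI := [fset A in fpowerset (Y `&` P) | sum_free A].
set SD := fpowerset (Y `\` P).
have sf_trace : (sf (Y `&` P) <= sf P)%N by apply/sf_fsubset/fsubsetIr.
apply: (leq_trans _ (leq_mul (leqnn _) sf_trace)).
rewrite -card_fpowerset -/SD mulnC.
pose split_at A := (A `&` P, A `\` P).
have split_inj : {in S &, injective split_at}.
  by move=> A B _ _ [eI eD]; rewrite -(fsetID P A) -(fsetID P B) eI eD.
rewrite /sf -/S -/SI.
have/eqP <- : #|` split_at @` S| == #|` S| by apply/card_in_imfsetP.
set pairs := [seq (B, E) | B <- enum_fset SI, E <- enum_fset SD].
apply: (@leq_trans #|` [fset z in pairs]|); last first.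
  by rewrite card_fseq (leq_trans (size_undup _)) // size_allpairs.
apply/fsubset_leq_card/fsubsetP => z /imfsetP [A + ->].
rewrite !inE /= fpowersetE => /andP[sAY sfA].
apply/allpairsP; exists (split_at A); split => //=.
- rewrite !inE /= fpowersetE fsetSI //=.
  exact: sum_free_fsubset (fsubsetIl _ _) sfA.
- by rewrite fpowersetE fsetSD.
Qed.

End SumFree.

Lemma count_iota_window (P : pred nat) d N a b : 0 < d ->
  (forall x, x < N -> P x -> a <= d * x <= b) ->
  d * count P (iota 0 N) <= b - a + d.
Proof.
move=> d_gt0 window.
set lo := (a + d.-1) %/ d; set hi := b %/ d.
have lo_le : a <= d * lo.
  have := ltn_pmod (a + d.-1) d_gt0; have := divn_eq (a + d.-1) d.
  rewrite -/lo mulnC; lia.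
have hi_le : d * hi <= b by rewrite mulnC leq_divM.
have sub : {subset filter P (iota 0 N) <= iota lo (hi.+1 - lo)}.
  move=> x; rewrite mem_filter !mem_iota /= => /andP[Px xN].
  have /andP[ax xb] := window x xN Px.
  have lo_x : lo <= x by rewrite /lo -ltnS ltn_divLR // mulSn; lia.
  have x_hi : x <= hi by rewrite /hi -(mulKn x d_gt0) leq_div2r.
  lia.
have := uniq_leq_size (filter_uniq P (iota_uniq 0 N)) sub.
rewrite size_iota size_filter => /(leq_mul (leqnn d)) /leq_trans; apply.
rewrite mulnBr mulnSr; lia.
Qed.

Lemma count_le_split3 (T : Type) (P c1 c2 c3 : pred T) s :
  (forall x, P x -> [|| c1 x, c2 x | c3 x]) ->
  count P s <= count (predI P c1) s + count (predI P c2) s + count (predI P c3) s.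
Proof.
move=> cover; elim: s => //= x s IH; case Px: (P x) => /=; last lia.
by have := cover x Px; case: (c1 x); case: (c2 x); case: (c3 x) => //= _; lia.
Qed.

Lemma sum_ramp_up a N : 20 * \sum_(0 <= s < N) (10 * s - a) <= (10 * N - a) ^ 2.
Proof.
elim: N => [|N IH]; first by rewrite big_nil.
rewrite big_nat_recr //= mulnDr.
have [aN | Na] := leqP a (10 * N).
  rewrite (_ : 10 * N.+1 - a = (10 * N - a) + 10); last lia.
  move: IH; set t := 10 * N - a; set S := \sum_(_ <= _ < _) _.
  rewrite sqrnD; lia.
by rewrite (_ : 10 * N - a = 0) in IH *; lia.
Qed.

Lemma sum_ramp_down b N : 20 * \sum_(0 <= s < N) (b - 10 * s) <= (b + 10) ^ 2.
Proof.
suff: 20 * \sum_(0 <= s < N) (b - 10 * s) + (b + 10 - 10 * N) ^ 2 <= (b + 10) ^ 2.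
  by apply: leq_trans; apply: leq_addr.
elim: N => [|N IH]; first by rewrite big_nil subn0.
rewrite big_nat_recr //= mulnDr.
move: IH; set S := \sum_(_ <= _ < _) _; set u := (b + 10) ^ 2.
have [Nb | bN] := leqP (10 * N) b.
  rewrite (_ : b + 10 - 10 * N = (b - 10 * N) + 10); last lia.
  rewrite (_ : b + 10 - 10 * N.+1 = b - 10 * N); last lia.
  set t := b - 10 * N; rewrite sqrnD; lia.
rewrite (_ : b - 10 * N = 0); last lia.
rewrite (_ : b + 10 - 10 * N.+1 = 0); last lia.
set t := (_ - _) ^ 2; lia.
Qed.

Section Antidiagonals.
Local Open Scope ring_scope.

Definition antidiag (s x : nat) : pt := (x%:Z, s%:Z - x%:Z).
Definition inD (n : nat) (p : pt) : bool := inR0 n p && ~~ inRuL n p.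
Definition on_antidiag (n s x : nat) : bool := inD n (antidiag s x).

Lemma on_antidiagE n s x : on_antidiag n s x =
  [&& x <= n, x <= s, s <= x + n, 7 * n <= 10 * s <= 17 * n,
      ~~ [&& s <= n, 10 * (2 * x - s) <= 8 * n & 10 * (s - 2 * x) <= 8 * n]
    & ~~ [&& 2 * c07 n <= s, 10 * (2 * x - s) <= 4 * n & 10 * (s - 2 * x) <= 4 * n]]%N.
Proof.
rewrite /on_antidiag /inD /inR0 /inRuL /inR /inL ceil07E /=.
by apply/idP/idP; lia.
Qed.

End Antidiagonals.

(* Twenty times the length of each of the two arms of D on the antidiagonal
   x + y = s, the middle segment excluded. *)
Definition arm (n s : nat) : nat := if s <= n then 10 * s - 8 * n else 16 * n - 10 * s.

Lemma count_antidiag_left n s :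
  20 * count (predI (on_antidiag n s) (fun x => 20 * x + 4 * n < 10 * s))
             (iota 0 n.+1) <= arm n s + 20.
Proof.
rewrite /arm; case: (leqP s n) => s_n.
  apply: leq_trans (@count_iota_window _ 20 _ 0 (10 * s - 8 * n) _ _) _ => //.
    by move=> x _ /andP[]; rewrite on_antidiagE; lia.
  by lia.
apply: leq_trans (@count_iota_window _ 20 _ (20 * (s - n)) (10 * s - 4 * n) _ _) _ => //.
  by move=> x _ /andP[]; rewrite on_antidiagE; lia.
by lia.
Qed.

Lemma count_antidiag_right n s :
  20 * count (predI (on_antidiag n s) (fun x => 10 * s + 4 * n < 20 * x))
             (iota 0 n.+1) <= arm n s + 20.
Proof.
rewrite /arm; case: (leqP s n) => s_n.
  apply: leq_trans (@count_iota_window _ 20 _ (10 * s + 8 * n) (20 * s) _ _) _ => //.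
    by move=> x _ /andP[]; rewrite on_antidiagE; lia.
  by lia.
apply: leq_trans (@count_iota_window _ 20 _ (10 * s + 4 * n) (20 * n) _ _) _ => //.
  by move=> x _ /andP[]; rewrite on_antidiagE; lia.
by lia.
Qed.

Lemma count_antidiag_middle n s :
  20 * count (predI (on_antidiag n s)
               (fun x => (10 * s <= 20 * x + 4 * n) && (20 * x <= 10 * s + 4 * n)))
             (iota 0 n.+1) <= 8 * n * (n < s < 2 * c07 n) + 20.
Proof.
have [mid | not_mid] := boolP (n < s < 2 * c07 n).
  apply: leq_trans (@count_iota_window _ 20 _ (10 * s - 4 * n) (10 * s + 4 * n) _ _) _ => //.
    by move=> x _ /andP[]; rewrite on_antidiagE; lia.
  by lia.
apply: leq_trans (@count_iota_window _ 20 _ 1 0 _ _) _ => //.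
  by move=> x _ /andP[]; rewrite on_antidiagE; lia.
by lia.
Qed.

Lemma count_antidiag n s :
  20 * count (on_antidiag n s) (iota 0 n.+1) <=
    2 * arm n s + 8 * n * (n < s < 2 * c07 n) + 60.
Proof.
have := count_antidiag_left n s; have := count_antidiag_right n s.
have := count_antidiag_middle n s.
have := @count_le_split3 _ (on_antidiag n s)
  (fun x => 20 * x + 4 * n < 10 * s) (fun x => 10 * s + 4 * n < 20 * x)
  (fun x => (10 * s <= 20 * x + 4 * n) && (20 * x <= 10 * s + 4 * n)) (iota 0 n.+1).
by move/(_ (fun x _ => ltac:(lia))); lia.
Qed.

Lemma sum_arm n : 10 * \sum_(0 <= s < (2 * n).+1) arm n s <= 20 * n ^ 2 + 80 * n + 100.
Proof.
rewrite (@big_cat_nat _ _ _ n.+1) //=; last lia.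
have rise : 20 * \sum_(0 <= s < n.+1) arm n s <= (2 * n + 10) ^ 2.
  rewrite (eq_big_nat _ _ (F2 := fun s => 10 * s - 8 * n)); last first.
    by move=> s /andP[_]; rewrite ltnS /arm => ->.
  by rewrite (_ : 2 * n + 10 = 10 * n.+1 - 8 * n) ?sum_ramp_up; last lia.
have fall : 20 * \sum_(n.+1 <= s < (2 * n).+1) arm n s <= (6 * n + 10) ^ 2.
  rewrite -{1}(add0n n.+1) big_addn; apply: leq_trans (sum_ramp_down _ _).
  rewrite leq_mul2l /=; apply: leq_sum => i _; rewrite /arm ifN; lia.
move: rise fall; set u := \sum_(_ <= _ < _) _; set v := \sum_(_ <= _ < _) _.
rewrite !sqrnD; lia.
Qed.

Lemma sum_middle n :
  10 * \sum_(0 <= s < (2 * n).+1) (n < s < 2 * c07 n) <= 4 * n + 20.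
Proof.
rewrite -big_mkcond /= sum1_count /index_iota subn0.
have := c07_bounds n.
have := @count_iota_window (fun s => n < s < 2 * c07 n) 1 (2 * n).+1 n.+1 (2 * c07 n).-1.
by move=> /(_ isT (fun s _ => ltac:(lia))); lia.
Qed.

Section Difference.
Local Open Scope fset_scope.
Local Open Scope ring_scope.

Lemma card_Lambda_fsetD n :
  (#|` Lambda n (inR0 n) `\` Lambda n (inRuL n)| <=
     \sum_(0 <= s < (2 * n).+1) count (on_antidiag n s) (iota 0 n.+1))%N.
Proof.
set L := [seq antidiag s x | s <- iota 0 (2 * n).+1,
                             x <- [seq x <- iota 0 n.+1 | on_antidiag n s x]].
have -> : (\sum_(0 <= s < (2 * n).+1) count (on_antidiag n s) (iota 0 n.+1) = size L)%N.
  rewrite size_allpairs_dep sumnE big_map /index_iota subn0.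
  by apply: eq_bigr => s _; rewrite size_filter.
apply: leq_trans (size_undup L); rewrite -card_fseq.
apply/fsubset_leq_card/fsubsetP => -[a b] ab_in; rewrite in_fset.
move: ab_in; rewrite !inE => /andP[not_RuL /andP[box_ab R0_ab]].
have D_ab : inD n (a, b) by rewrite /inD R0_ab; move: not_RuL; rewrite box_ab.
apply/allpairsPdep; exists (absz (a + b)), (absz a).
have ab_eq : (a, b) = antidiag (absz (a + b)) (absz a).
  by move: R0_ab; rewrite /inR0 /antidiag /= => R0_ab; congr (_, _); lia.
rewrite mem_filter !mem_iota /on_antidiag -ab_eq D_ab; move: R0_ab; rewrite /inR0 /=.
by split => //; lia.
Qed.

End Difference.

Lemma card_Lambda_fsetD_le n :
  100 * #|` (Lambda n (inR0 n) `\` Lambda n (inRuL n))%fset| <= 36 * n ^ 2 + 760 * n + 400.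
Proof.
have levels :
  20 * \sum_(0 <= s < (2 * n).+1) count (on_antidiag n s) (iota 0 n.+1) <=
  2 * \sum_(0 <= s < (2 * n).+1) arm n s
    + 8 * n * \sum_(0 <= s < (2 * n).+1) (n < s < 2 * c07 n) + 60 * (2 * n).+1.
  rewrite big_distrr; apply: leq_trans (_ : _ <= \sum_(0 <= s < (2 * n).+1)
      (2 * arm n s + 8 * n * (n < s < 2 * c07 n) + 60)) _.
    by apply: leq_sum => s _; apply: count_antidiag.
  rewrite !big_split /= -!big_distrr /= !sum_nat_const_nat.
  by set A := \sum_(_ <= _ < _) arm n _; set nM := 8 * n * _; lia.
have := card_Lambda_fsetD n; have := sum_arm n; have := sum_middle n.
move: levels; set C := \sum_(_ <= _ < _) count _ _.
set A := \sum_(_ <= _ < _) arm n _; set M := \sum_(_ <= _ < _) _.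
move=> levels mid arms card.
have mid' : 10 * (n * M) <= 4 * (n * n) + 20 * n.
  have e1 : n * (10 * M) = 10 * (n * M) by rewrite mulnCA.
  have e2 : n * (4 * n + 20) = 4 * (n * n) + 20 * n by rewrite mulnDr mulnCA [n * 20]mulnC.
  by rewrite -e1 -e2; apply: leq_mul.
rewrite -mulnA expnS expn1 in levels arms *.
move: levels mid' arms card; set nM := n * M; set nn := n * n.
lia.
Qed.

Lemma INR_expn2 k : INR (2 ^ k) = (2 ^ k)%R.
Proof.
elim: k => [|k IH] //; rewrite expnS -multE mult_INR IH /=; lra.
Qed.

Lemma INR_expn2_le_Rpower k (e : R) : (INR k <= e)%R -> (INR (2 ^ k) <= Rpower 2 e)%R.
Proof.
move=> k_le_e; rewrite INR_expn2 -(Rpower_pow k _ Rlt_0_2).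
by apply: Rle_Rpower => //; lra.
Qed.

Theorem mainTheorem7 :
  exists C : R, forall n : nat, (0 < n)%N ->
    (INR (sf (Lambda n (inR0 n)))
     <= Rpower 2 ((36 / 100) * INR n ^ 2 + C * INR n) * INR (sf (Lambda n (inRuL n))))%R.
Proof.
exists 12%R => n n_gt0.
set Y := Lambda n (inR0 n); set P := Lambda n (inRuL n).
set k := #|` (Y `\` P)%fset|.
have card_k : (k * 100 <= n * n * 36 + n * 1160)%N.
  by have := card_Lambda_fsetD_le n; rewrite expnS expn1 -/Y -/P -/k; lia.
have k_le : (INR k <= 36 / 100 * INR n ^ 2 + 12 * INR n)%R.
  have n_ge1 : (1 <= INR n)%R by apply: (le_INR 1); apply/ssrnat.leP.
  move/ssrnat.leP/le_INR: card_k; rewrite -!multE -!plusE !plus_INR !mult_INR.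
  rewrite !INR_IZR_INZ /= in n_ge1 *; move=> ?; nra.
apply: Rle_trans (le_INR _ _ (elimT ssrnat.leP (sf_le_exp_card_fsetD Y P))) _.
rewrite -multE mult_INR; apply: Rmult_le_compat_r; first exact: pos_INR.
exact: INR_expn2_le_Rpower.
Qed.
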